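(* Let $M,N$ be matroids on a common set $E$, let $I$ be independent in both $M$ and $N$, let $W:=W(M/I,N/I)$ and let $B\in B(M/I,N/I,W)$. Then $I\cup B$ is a nice feasible set with respect to $(M,N)$.
   Context: Matroids are possibly infinite. $M^*$ dual, $M\upharpoonright X$ restriction, $M/X:=(M^*\upharpoonright(E\setminus X))^*$ (on $E\setminus X$), $M.X:=M/(E\setminus X)$. A loop is an element $e$ with $\{e\}$ dependent; $r(K)=0$ means the empty set is a base of $K$. $W$ is an $(M,N)$-wave if $M\upharpoonright W$ has a base independent in $N.W$; the union of all waves is a wave, denoted $W(M,N)$. $B(M,N,X)$ is the set of common bases of $M\upharpoonright X$ and $N.X$. $\mathsf{cond}(M,N)$: for every $(M,N)$-wave $W$, $N.W$ has an $M$-independent base. $\mathsf{cond}^+(M,N)$: $W(M,N)$ consists of $M$-loops and $r(N.W(M,N))=0$. A set $I$ independent in both $M$ and $N$ is feasible if $\mathsf{cond}(M/I,N/I)$ holds, and nice feasible if moreover $\mathsf{cond}^+(M/I,N/I)$ holds. *)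

(* Possibly infinite matroids, given by independence axioms
   (Bruhn–Diestel–Kriesell–Pendavingh–Wollan).  Subsets of a type T are
   predicates T -> Prop. *)

Definition set (T : Type) := T -> Prop.

Section Sets.
Context {T : Type}.
Definition subset (A B : set T) : Prop := forall x, A x -> B x.
Definition set0 : set T := fun _ => False.
Definition set1 (a : T) : set T := fun x => x = a.
Definition setU (A B : set T) : set T := fun x => A x \/ B x.
Definition setI (A B : set T) : set T := fun x => A x /\ B x.
Definition setD (A B : set T) : set T := fun x => A x /\ ~ B x.
End Sets.

Record mdata (T : Type) := MData { ground : set T ; indep : set T -> Prop }.
Arguments MData {T} _ _.
Arguments ground {T} _ _.
Arguments indep {T} _ _.

Section Matroids.
Context {T : Type}.
Implicit Types (M N : mdata T) (X I J B W : set T).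

Definition base M B : Prop :=
  indep M B /\ forall J, indep M J -> subset B J -> subset J B.

Definition is_matroid M : Prop :=
  (forall I, indep M I -> subset I (ground M)) /\
  indep M set0 /\
  (forall I J, indep M J -> subset I J -> indep M I) /\
  (forall I B, indep M I -> ~ base M I -> base M B ->
     exists x, B x /\ ~ I x /\ indep M (setU I (set1 x))) /\
  (forall I X, indep M I -> subset I X -> subset X (ground M) ->
     exists J, indep M J /\ subset I J /\ subset J X /\
       forall J', indep M J' -> subset J J' -> subset J' X -> subset J' J).

(* dual: bases of M^* are the complements of bases of M *)
Definition dual M : mdata T :=
  MData (ground M)
        (fun I => subset I (ground M) /\
                  exists B, base M B /\ forall x, I x -> ~ B x).

Definition restrict M X : mdata T :=
  MData (setI (ground M) X) (fun I => indep M I /\ subset I X).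

Definition contract M X : mdata T :=
  dual (restrict (dual M) (setD (ground M) X)).

(* M.X := M/(E \ X) *)
Definition contract_to M X : mdata T := contract M (setD (ground M) X).

Definition loop M (e : T) : Prop := ground M e /\ ~ indep M (set1 e).

(* r(K) = 0 : the empty set is a base of K *)
Definition rank_zero M : Prop := base M set0.

Definition wave M N W : Prop :=
  subset W (ground M) /\
  exists B, base (restrict M W) B /\ indep (contract_to N W) B.

Definition wave_union M N : set T := fun x => exists W, wave M N W /\ W x.

Definition common_bases M N X (B : set T) : Prop :=
  base (restrict M X) B /\ base (contract_to N X) B.

Definition cond M N : Prop :=
  forall W, wave M N W -> exists B, base (contract_to N W) B /\ indep M B.

Definition cond_plus M N : Prop :=
  (forall x, wave_union M N x -> loop M x) /\
  rank_zero (contract_to N (wave_union M N)).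

Definition feasible M N I : Prop :=
  indep M I /\ indep N I /\ cond (contract M I) (contract N I).

Definition nice_feasible M N I : Prop :=
  feasible M N I /\ cond_plus (contract M I) (contract N I).

End Matroids.

From Stdlib Require Import Classical FunctionalExtensionality PropExtensionality.

(* From this
   we get that M/X is again a matroid and that contraction can be done in
   stages, M/(I ∪ B) = (M/I)/B for I independent in M and B independent in
   M/I.  The theorem is thereby reduced to the case I = ∅, which is the
   section WaveBase: for B ∈ B(M, N, W) with W = W(M, N), every
   (M/B, N/B)-wave W2 is contained in W (W ∪ W2 is an (M, N)-wave with base
   B ∪ B2), and for W2 ⊆ W the matroid (N/B).W2 has rank zero while W2
   consists of loops of M/B, since otherwise B could be enlarged inside
   N.W resp. M|W.  These two facts give cond and cond+ for (M/B, N/B). *)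

Ltac unfold_sets := unfold subset, setU, setI, setD, set1, set0 in *.

Section MatroidFacts.
Context {T : Type} (M : mdata T).

Lemma mdata_ext (K : mdata T) :
  (forall x, ground M x <-> ground K x) ->
  (forall J, indep M J <-> indep K J) -> M = K.
Proof.
  destruct M as [E i], K as [E' i']; simpl; intros HE Hi.
  f_equal; apply functional_extensionality; intros;
    apply propositional_extensionality; auto.
Qed.

Lemma base_restrict_iff X BX :
  base (restrict M X) BX <->
  indep M BX /\ subset BX X /\
  (forall J, indep M J -> subset J X -> subset BX J -> subset J BX).
Proof.
  unfold base, restrict; simpl; split.
  - intros [[Hi HX] Hmax]; repeat split; auto.
  - intros [Hi [HX Hmax]]; repeat split; auto. intros J [HJ HJX]; auto.
Qed.

Lemma self_base_restrict I : indep M I -> base (restrict M I) I.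
Proof.
  intros HI; apply base_restrict_iff; repeat split; auto; unfold_sets; auto.
Qed.

Hypothesis HM : is_matroid M.

Lemma indep_ground I : indep M I -> subset I (ground M).
Proof. destruct HM as [H _]; apply H. Qed.

Lemma indep_empty : indep M set0.
Proof. destruct HM as [_ [H _]]; exact H. Qed.

Lemma indep_subset I J : indep M J -> subset I J -> indep M I.
Proof. destruct HM as [_ [_ [H _]]]; apply H. Qed.

Lemma indep_augment I C : indep M I -> ~ base M I -> base M C ->
  exists x, C x /\ ~ I x /\ indep M (setU I (set1 x)).
Proof. destruct HM as [_ [_ [_ [H _]]]]; apply H. Qed.

Lemma indep_extend I X : indep M I -> subset I X -> subset X (ground M) ->
  exists J, indep M J /\ subset I J /\ subset J X /\
    forall J', indep M J' -> subset J J' -> subset J' X -> subset J' J.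
Proof. destruct HM as [_ [_ [_ [_ H]]]]; apply H. Qed.

Lemma exists_base_restrict I X : indep M I -> subset I X ->
  exists BX, base (restrict M X) BX /\ subset I BX.
Proof.
  intros HI HIX.
  destruct (indep_extend I (setI (ground M) X)) as [J [HJ [HIJ [HJX Hmax]]]];
    auto.
  - pose proof (indep_ground I HI); unfold_sets; auto.
  - unfold_sets; tauto.
  - exists J; split; auto. apply base_restrict_iff; repeat split; auto.
    + intros x Hx; apply HJX; auto.
    + intros K HK HKX HJK; apply Hmax; auto.
      pose proof (indep_ground K HK); unfold_sets; auto.
Qed.

Lemma exists_base I : indep M I -> exists C, base M C /\ subset I C.
Proof.
  intros HI.
  destruct (exists_base_restrict I (ground M) HI (indep_ground I HI))
    as [C [HC HIC]].
  apply base_restrict_iff in HC; destruct HC as [HCi [_ Hmax]].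
  exists C; repeat split; auto.
  intros K HK; apply Hmax; auto; apply indep_ground; auto.
Qed.

Lemma base_of_maximal_avoiding C0 (K : set T) C :
  base M C0 -> (forall x, K x -> ~ C0 x) -> indep M C ->
  subset C (fun x => ground M x /\ ~ K x) ->
  (forall J, indep M J -> subset C J ->
     subset J (fun x => ground M x /\ ~ K x) -> subset J C) ->
  base M C.
Proof.
  intros HC0 HKC0 HC HCK Hmax.
  apply NNPP; intros Hnb.
  destruct (indep_augment C C0 HC Hnb HC0) as [x [C0x [nCx Hx]]].
  apply nCx, (Hmax _ Hx); unfold_sets; auto.
  intros y [Cy | Hy]; auto. subst y. split.
  - exact (indep_ground C0 (proj1 HC0) x C0x).
  - intros Kx; exact (HKC0 x Kx C0x).
Qed.

Lemma base_exchange_outside X BX C C' y :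
  base M C -> base (restrict M X) BX -> subset BX C -> C y -> ~ X y ->
  base M C' -> exists x, C' x /\ ~ X x /\ (x = y \/ ~ C x).
Proof.
  intros HC HBX HBXC Cy nXy HC'.
  apply base_restrict_iff in HBX; destruct HBX as [_ [HBXX HBXmax]].
  set (C1 := fun z => C z /\ z <> y).
  assert (HC1 : indep M C1)
    by (apply indep_subset with C; [apply HC | unfold C1; unfold_sets; tauto]).
  assert (Hnb : ~ base M C1).
  { intros [_ Hm].
    assert (HCC1 : subset C C1) by (apply Hm; [apply HC | unfold C1, subset; tauto]).
    apply HCC1 in Cy; unfold C1 in Cy; tauto. }
  destruct (indep_augment C1 C' HC1 Hnb HC') as [x [C'x [nC1x HC1x]]].
  exists x; split; auto. split.
  - intros Xx. apply nC1x. split.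
    + apply HBXC, (HBXmax (setU BX (set1 x))); unfold_sets; auto.
      * apply indep_subset with (setU C1 (set1 x)); auto.
        unfold C1; unfold_sets; intros z [BXz | ->]; auto.
        left; split; auto. intros ->; auto.
      * intros z [BXz | ->]; auto.
    + intros ->; auto.
  - destruct (classic (x = y)); auto. right; intros Cx; apply nC1x; split; auto.
Qed.

End MatroidFacts.

Lemma ground_contract {T : Type} (M : mdata T) X x :
  ground (contract M X) x <-> ground M x /\ ~ X x.
Proof. simpl; unfold setI, setD; tauto. Qed.

Lemma ground_contract_sub {T : Type} (M : mdata T) X x :
  ground (contract M X) x -> ground M x.
Proof. intros Hx; apply ground_contract in Hx; apply Hx. Qed.

Section Contraction.
Context {T : Type} (M : mdata T) (X BX : set T).
Hypotheses (HM : is_matroid M) (HBX : base (restrict M X) BX).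

(* If J is independent in M/X then J ∪ BX is independent in M: J misses a
   base K of M^*|(E \ X), and a maximal independent set containing BX and
   avoiding K is a base of M that contains J. *)
Lemma contract_indep_elim J : indep (contract M X) J ->
  subset J (ground M) /\ (forall x, J x -> ~ X x) /\ indep M (setU J BX).
Proof.
  intros [HJ [K [HK HJK]]].
  apply base_restrict_iff in HK.
  destruct HK as [[HKE [C0 [HC0 HKC0]]] [HKY HKmax]].
  pose proof HBX as HBX'; apply base_restrict_iff in HBX'.
  destruct HBX' as [HBXi [HBXX _]].
  destruct (indep_extend M HM BX (fun x => ground M x /\ ~ K x))
    as [C [HC [HBXC [HCK HCmax]]]]; auto.
  { intros x BXx; split; [exact (indep_ground M HM BX HBXi x BXx) |].
    intros Kx; apply (HKY x Kx); auto. }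
  { intros x Hx; apply Hx. }
  assert (HCb : base M C) by (apply (base_of_maximal_avoiding M HM C0 K C); auto).
  assert (HJX : forall x, J x -> ground M x /\ ~ X x)
    by (intros x Jx; specialize (HJ x Jx); simpl in HJ; unfold_sets; tauto).
  split; [| split]; try (intros x Jx; apply HJX in Jx; tauto).
  apply (indep_subset M HM _ C); auto.
  intros x [Jx | BXx]; auto.
  apply NNPP; intros nCx. apply (HJK x Jx).
  apply (HKmax (setU K (set1 x))); unfold_sets; auto.
  simpl; split.
  - intros y [Ky | Hy]; auto. subst y; apply HJX; auto.
  - exists C; split; auto. intros y [Ky | Hy] Cy.
    + apply HCK in Cy; tauto.
    + subst y; auto.
  - intros y [Ky | Hy]; auto. subst y; apply HJX; auto.
Qed.

(* Conversely, if J ⊆ E \ X and J ∪ BX is independent, extend it to a base C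
   of M; then (E \ X) \ C is a base of M^*|(E \ X) disjoint from J. *)
Lemma contract_indep_intro J :
  subset J (ground M) -> (forall x, J x -> ~ X x) -> indep M (setU J BX) ->
  indep (contract M X) J.
Proof.
  intros HJE HJX HJi.
  destruct (exists_base M HM _ HJi) as [C [HC HJBXC]].
  assert (HBXC : subset BX C) by (intros x BXx; apply HJBXC; right; auto).
  split.
  { intros x Jx; simpl; unfold_sets; auto. }
  exists (fun y => ground M y /\ ~ X y /\ ~ C y); split.
  2: { intros x Jx [_ [_ nCx]]; apply nCx, HJBXC; left; auto. }
  apply base_restrict_iff; split; [| split].
  - simpl; split; [intros y Hy; apply Hy |].
    exists C; split; auto. intros y Hy; apply Hy.
  - intros y Hy; unfold_sets; tauto.
  - intros J' [HJ'E [C' [HC' HJ'C']]] HJ'Y HKJ' y J'y.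
    destruct (HJ'Y y J'y) as [Ey nXy].
    split; [| split]; auto. intros Cy.
    destruct (base_exchange_outside M HM X BX C C' y HC HBX HBXC Cy nXy HC')
      as [x [C'x [nXx [Hxy | nCx]]]].
    + subst x; exact (HJ'C' y J'y C'x).
    + apply (HJ'C' x); auto. apply HKJ'; repeat split; auto.
      exact (indep_ground M HM C' (proj1 HC') x C'x).
Qed.

Lemma contract_base_union C : base (contract M X) C -> base M (setU C BX).
Proof.
  intros [HC Hmax].
  pose proof HBX as HBX'; apply base_restrict_iff in HBX'.
  destruct HBX' as [_ [HBXX HBXmax]].
  destruct (contract_indep_elim C HC) as [_ [HCX HCi]].
  split; auto. intros K HK HCK x Kx.
  destruct (classic (X x)) as [Xx | nXx].
  - right. apply (HBXmax (fun y => K y /\ X y)).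
    + apply (indep_subset M HM _ K); auto; intros y Hy; apply Hy.
    + intros y Hy; apply Hy.
    + intros y BXy; split; [apply HCK; right |]; auto.
    + split; auto.
  - left. apply (Hmax (fun y => K y /\ ~ X y)); [| | split; auto].
    2: { intros y Cy; split; [apply HCK; left | apply HCX]; auto. }
    apply contract_indep_intro.
    + intros y Hy; exact (indep_ground M HM K HK y (proj1 Hy)).
    + intros y Hy; apply Hy.
    + apply (indep_subset M HM _ K); auto.
      intros y [[Ky _] | BXy]; auto. apply HCK; right; auto.
Qed.

Lemma contract_base_of_union C :
  indep (contract M X) C -> base M (setU C BX) -> base (contract M X) C.
Proof.
  intros HC [_ Hmax]. split; auto.
  intros J HJ HCJ x Jx.
  destruct (contract_indep_elim J HJ) as [_ [HJX HJi]].
  destruct (Hmax (setU J BX) HJi) with x as [Cx | BXx]; auto.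
  - intros y [Cy | BXy]; [left | right]; auto.
  - left; auto.
  - apply base_restrict_iff in HBX; destruct HBX as [_ [HBXX _]].
    destruct (HJX x Jx); auto.
Qed.

Lemma contract_augment I C : indep (contract M X) I ->
  ~ base (contract M X) I -> base (contract M X) C ->
  exists x, C x /\ ~ I x /\ indep (contract M X) (setU I (set1 x)).
Proof.
  intros HI HnI HC.
  destruct (contract_indep_elim I HI) as [HIE [HIX HIi]].
  destruct (contract_indep_elim C (proj1 HC)) as [HCE [HCX _]].
  assert (HnM : ~ base M (setU I BX))
    by (intros Hb; apply HnI, contract_base_of_union; auto).
  destruct (indep_augment M HM _ _ HIi HnM (contract_base_union C HC))
    as [x [Hx [nIBXx HIx]]].
  assert (Cx : C x).
  { destruct Hx as [Cx | BXx]; auto. destruct nIBXx; right; auto. }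
  exists x; split; [| split]; auto.
  { intros Ix; apply nIBXx; left; auto. }
  apply contract_indep_intro.
  - intros y [Iy | Hy]; auto. hnf in Hy; subst y; auto.
  - intros y [Iy | Hy]; auto. hnf in Hy; subst y; auto.
  - apply (indep_subset M HM _ _ HIx); unfold_sets; tauto.
Qed.

(* The maximality axiom for M/X: extend I ∪ BX maximally inside Z ∪ BX in M
   and discard X. *)
Lemma contract_extend I Z : indep (contract M X) I -> subset I Z ->
  subset Z (ground (contract M X)) ->
  exists J, indep (contract M X) J /\ subset I J /\ subset J Z /\
    forall J', indep (contract M X) J' -> subset J J' -> subset J' Z ->
      subset J' J.
Proof.
  intros HI HIZ HZ.
  assert (HZX : forall y, Z y -> ground M y /\ ~ X y)
    by (intros y Zy; apply ground_contract, HZ; auto).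
  destruct (contract_indep_elim I HI) as [_ [HIX HIi]].
  pose proof HBX as HBX'; apply base_restrict_iff in HBX'.
  destruct HBX' as [HBXi [HBXX _]].
  destruct (indep_extend M HM (setU I BX) (setU Z BX) HIi)
    as [J [HJ [HIJ [HJZ Hmax]]]].
  { intros y [Iy | BXy]; [left | right]; auto. }
  { intros y [Zy | BXy]; [apply HZX | apply (indep_ground M HM BX)]; auto. }
  exists (fun y => J y /\ ~ X y). split; [| split; [| split]].
  - apply contract_indep_intro.
    + intros y [Jy _]; exact (indep_ground M HM J HJ y Jy).
    + intros y Hy; apply Hy.
    + apply (indep_subset M HM _ J); auto.
      intros y [[Jy _] | BXy]; auto. apply HIJ; right; auto.
  - intros y Iy; split; [apply HIJ; left |]; auto.
  - intros y [Jy nXy]. destruct (HJZ y Jy) as [Zy | BXy]; auto.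
    destruct nXy; auto.
  - intros J' HJ' HJJ' HJ'Z y J'y.
    destruct (contract_indep_elim J' HJ') as [_ [HJ'X HJ'i]].
    split; [| apply HJ'X; auto].
    apply (Hmax (setU J' BX) HJ'i); [| | left; auto].
    + intros z Jz. destruct (classic (X z)) as [Xz | nXz].
      * right. destruct (HJZ z Jz) as [Zz | BXz]; auto.
        destruct (HZX z Zz); contradiction.
      * left; apply HJJ'; split; auto.
    + intros z [J'z | BXz]; [left | right]; auto.
Qed.

End Contraction.

Lemma contract_is_matroid {T : Type} (M : mdata T) X :
  is_matroid M -> is_matroid (contract M X).
Proof.
  intros HM.
  destruct (exists_base_restrict M HM set0 X (indep_empty M HM))
    as [BX [HBX _]]; [intros x [] |].
  pose proof HBX as HBX'; apply base_restrict_iff in HBX'.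
  destruct HBX' as [HBXi _].
  split; [| split; [| split; [| split]]].
  - intros I HI; apply HI.
  - apply (contract_indep_intro M X BX HM HBX); auto; try (intros x []).
    apply (indep_subset M HM _ BX); auto. intros x [[] | BXx]; auto.
  - intros I J HJ HIJ.
    destruct (contract_indep_elim M X BX HM HBX J HJ) as [HJE [HJX HJi]].
    apply (contract_indep_intro M X BX HM HBX).
    + intros x Ix; apply HJE, HIJ; auto.
    + intros x Ix; apply HJX, HIJ; auto.
    + apply (indep_subset M HM _ _ HJi). intros x [Ix | BXx]; [left | right]; auto.
  - apply (contract_augment M X BX); auto.
  - apply (contract_extend M X BX); auto.
Qed.

Lemma contract_indep_ground {T : Type} (M : mdata T) Y J x :
  indep (contract M Y) J -> J x -> ground M x /\ ~ Y x.
Proof. intros [HJ _] Jx; apply ground_contract, HJ; auto. Qed.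

Lemma contract_to_indep_sub {T : Type} (M : mdata T) X J x :
  indep (contract_to M X) J -> J x -> X x.
Proof.
  intros HJ Jx. destruct (contract_indep_ground _ _ _ x HJ Jx) as [Ex HXx].
  apply NNPP; intros nXx; apply HXx; split; auto.
Qed.

Section ContractionFacts.
Context {T : Type} (M : mdata T).
Hypothesis HM : is_matroid M.

Lemma contract_indep_union Y J D :
  indep (contract M Y) J -> indep M D -> subset D Y -> indep M (setU J D).
Proof.
  intros HJ HD HDY.
  destruct (exists_base_restrict M HM D Y HD HDY) as [DY [HDY' HDDY]].
  destruct (contract_indep_elim M Y DY HM HDY' J HJ) as [_ [_ HJi]].
  apply (indep_subset M HM _ _ HJi). intros x [Jx | Dx]; [left | right]; auto.
Qed.

Lemma contract_indep_indep Y J : indep (contract M Y) J -> indep M J.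
Proof.
  intros HJ. apply (indep_subset M HM _ (setU J set0)).
  - apply (contract_indep_union Y); [auto | apply indep_empty; auto | intros x []].
  - intros x Jx; left; auto.
Qed.

Lemma contract_indep_iff I J : indep M I ->
  indep (contract M I) J <->
  subset J (ground M) /\ (forall x, J x -> ~ I x) /\ indep M (setU J I).
Proof.
  intros HI; pose proof (self_base_restrict M I HI) as HII; split.
  - apply contract_indep_elim; auto.
  - intros [HJE [HJI HJi]]; apply (contract_indep_intro M I I); auto.
Qed.

Lemma union_indep_of_contract I B :
  indep M I -> indep (contract M I) B -> indep M (setU I B).
Proof.
  intros HI HB. apply (contract_indep_iff I B HI) in HB.
  apply (indep_subset M HM _ _ (proj2 (proj2 HB))); unfold_sets; tauto.
Qed.

Lemma rank_zero_of_trivial :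
  (forall J x, indep M J -> J x -> False) -> rank_zero M.
Proof.
  intros Htriv; split; [apply indep_empty; auto |].
  intros J HJ _ x Jx; exact (Htriv J x HJ Jx).
Qed.

End ContractionFacts.

Lemma contract_in_stages {T : Type} (M : mdata T) I B :
  is_matroid M -> indep M I -> indep (contract M I) B ->
  contract M (setU I B) = contract (contract M I) B.
Proof.
  intros HM HI HB.
  pose proof (union_indep_of_contract M HM I B HI HB) as HIB.
  pose proof (contract_is_matroid M I HM) as HMI.
  apply mdata_ext.
  { intros x; rewrite !ground_contract; unfold_sets; tauto. }
  intros J; rewrite (contract_indep_iff M HM _ J HIB),
    (contract_indep_iff (contract M I) HMI B J HB),
    (contract_indep_iff M HM I _ HI).
  split.
  - intros [HJE [HJIB HJi]]; split; [| split].
    + intros x Jx; apply ground_contract; split; auto.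
      intros Ix; apply (HJIB x Jx); left; auto.
    + intros x Jx Bx; apply (HJIB x Jx); right; auto.
    + split; [| split].
      * intros x [Jx | Bx]; auto.
        exact (indep_ground M HM _ HIB x (or_intror Bx)).
      * intros x [Jx | Bx] Ix; [apply (HJIB x Jx); left; auto |].
        apply (contract_indep_iff M HM I B HI) in HB. exact (proj1 (proj2 HB) x Bx Ix).
      * apply (indep_subset M HM _ _ HJi); unfold_sets; tauto.
  - intros [HJE [HJB [_ [HJI HJi]]]]; split; [| split].
    + intros x Jx; apply (ground_contract_sub M I), HJE; auto.
    + intros x Jx [Ix | Bx]; [apply (HJI x) | apply (HJB x)]; auto; left; auto.
    + apply (indep_subset M HM _ _ HJi); unfold_sets; tauto.
Qed.

Section WaveBase.
Context {T : Type} (M N : mdata T) (B : set T).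
Hypotheses (HM : is_matroid M) (HN : is_matroid N) (HE : ground M = ground N).
Hypothesis HB : common_bases M N (wave_union M N) B.

Local Notation W := (wave_union M N).

Lemma wave_union_ground x : W x -> ground M x.
Proof. intros [W0 [[HW0 _] W0x]]; auto. Qed.

Lemma wave_base_M :
  indep M B /\ subset B W /\
  (forall J, indep M J -> subset J W -> subset B J -> subset J B).
Proof. apply base_restrict_iff, (proj1 HB). Qed.

Lemma wave_base_indep_N : indep N B.
Proof. apply (contract_indep_indep N HN _ _ (proj1 (proj2 HB))). Qed.

Lemma wave_base_union_coindep D :
  indep N D -> (forall x, D x -> ~ W x) -> indep N (setU B D).
Proof.
  intros HD HDW. apply (contract_indep_union N HN (setD (ground N) W)).
  - exact (proj1 (proj2 HB)).
  - auto.
  - intros x Dx; split; [apply (indep_ground N HN D) |]; auto.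
Qed.

Lemma lift_base_M W2 B2 : base (restrict (contract M B) W2) B2 ->
  base (restrict M (setU W W2)) (setU B B2).
Proof.
  destruct wave_base_M as [HBi [HBW HBmax]].
  intros HB2; apply base_restrict_iff in HB2.
  destruct HB2 as [HB2i [HB2W2 HB2max]].
  apply (contract_indep_iff M HM B B2 HBi) in HB2i.
  destruct HB2i as [_ [HB2B HB2Bi]].
  apply base_restrict_iff; split; [| split].
  - apply (indep_subset M HM _ _ HB2Bi); unfold_sets; tauto.
  - intros x [Bx | B2x]; [left | right]; auto.
  - intros J HJ HJW HBJ y Jy.
    assert (HJWB : forall z, J z -> W z -> B z).
    { intros z Jz Wz. apply (HBmax (fun u => J u /\ W u)); [| | | split]; auto.
      - apply (indep_subset M HM _ J); auto. intros u Hu; apply Hu.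
      - intros u Hu; apply Hu.
      - intros u Bu; split; [apply HBJ; left | apply HBW]; auto. }
    destruct (classic (B y)) as [By | nBy]; [left; auto | right].
    apply (HB2max (fun u => J u /\ ~ B u)); [| | | split; auto].
    + apply (contract_indep_iff M HM B _ HBi); split; [| split].
      * intros u [Ju _]; exact (indep_ground M HM J HJ u Ju).
      * intros u Hu; apply Hu.
      * apply (indep_subset M HM _ J); auto.
        intros u [[Ju _] | Bu]; auto. apply HBJ; left; auto.
    + intros u [Ju nBu]. destruct (HJW u Ju) as [Wu | W2u]; auto.
      destruct nBu; auto.
    + intros u B2u; split; [apply HBJ; right | apply HB2B]; auto.
Qed.

Lemma contracted_indep_union W2 J D :
  indep (contract_to (contract N B) W2) J -> indep N D ->
  (forall x, D x -> ~ W x /\ ~ W2 x) -> indep N (setU (setU J D) B).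
Proof.
  intros HJ HDi HDW.
  destruct wave_base_M as [_ [HBW _]].
  pose proof wave_base_indep_N as HBN.
  assert (HBD : indep N (setU B D))
    by (apply wave_base_union_coindep; auto; intros x Dx; apply HDW; auto).
  assert (HDNB : indep (contract N B) D).
  { apply (contract_indep_iff N HN B D HBN); split; [| split].
    - apply (indep_ground N HN D HDi).
    - intros x Dx Bx; apply (proj1 (HDW x Dx)), HBW; auto.
    - apply (indep_subset N HN _ _ HBD); unfold_sets; tauto. }
  assert (HJD : indep (contract N B) (setU J D)).
  { apply (contract_indep_union (contract N B) (contract_is_matroid N B HN)
             (setD (ground (contract N B)) W2)); auto.
    intros x Dx; split; [apply ground_contract; split |].
    - apply (indep_ground N HN D HDi); auto.
    - intros Bx; apply (proj1 (HDW x Dx)), HBW; auto.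
    - apply (proj2 (HDW x Dx)). }
  apply (contract_indep_iff N HN B _ HBN) in HJD; apply HJD.
Qed.

Lemma lift_indep_N W2 B2 : subset W2 (ground (contract M B)) ->
  indep (contract_to (contract N B) W2) B2 ->
  indep (contract_to N (setU W W2)) (setU B B2).
Proof.
  intros HW2 HB2.
  destruct wave_base_M as [_ [HBW _]].
  destruct (exists_base_restrict N HN set0 (setD (ground N) (setU W W2))
              (indep_empty N HN)) as [D [HD _]]; [intros x [] |].
  pose proof HD as HD'; apply base_restrict_iff in HD'.
  destruct HD' as [HDi [HDY _]].
  assert (HDW : forall x, D x -> ~ W x /\ ~ W2 x)
    by (intros x Dx; destruct (HDY x Dx) as [_ H]; unfold_sets; tauto).
  pose proof (contracted_indep_union W2 B2 D HB2 HDi HDW) as HB2DB.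
  apply (contract_indep_intro N _ D HN HD).
  - intros x [Bx | B2x].
    + rewrite <- HE; apply wave_union_ground, HBW; auto.
    + rewrite <- HE; apply (ground_contract_sub M B), HW2.
      apply (contract_to_indep_sub _ _ _ x HB2); auto.
  - intros x [Bx | B2x] [_ HxW]; apply HxW; [left; apply HBW | right]; auto.
    apply (contract_to_indep_sub _ _ _ x HB2); auto.
  - apply (indep_subset N HN _ _ HB2DB); unfold_sets; tauto.
Qed.

(* Every (M/B, N/B)-wave W2 lies inside W: W ∪ W2 is an (M, N)-wave. *)
Lemma contracted_wave_sub W2 :
  wave (contract M B) (contract N B) W2 -> subset W2 W.
Proof.
  intros [HW2 [B2 [HB2M HB2N]]] x W2x.
  exists (setU W W2); split; [| right; auto].
  split; [| exists (setU B B2); split].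
  - intros y [Wy | W2y];
      [apply wave_union_ground | apply (ground_contract_sub M B), HW2]; auto.
  - apply lift_base_M; auto.
  - apply lift_indep_N; auto.
Qed.

(* For W2 ⊆ W the matroid (N/B).W2 has no nonempty independent set: a
   nonempty one would enlarge B inside N.W. *)
Lemma contracted_coindep_trivial W2 J x : subset W2 W ->
  indep (contract_to (contract N B) W2) J -> J x -> False.
Proof.
  intros HW2W HJ Jx.
  destruct wave_base_M as [_ [HBW _]].
  destruct (exists_base_restrict N HN set0 (setD (ground N) W)
              (indep_empty N HN)) as [D [HD _]]; [intros y [] |].
  pose proof HD as HD'; apply base_restrict_iff in HD'.
  destruct HD' as [HDi [HDW _]].
  assert (HDW2 : forall y, D y -> ~ W y /\ ~ W2 y)
    by (intros y Dy; split; intros Hy; apply (HDW y Dy); auto).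
  pose proof (contracted_indep_union W2 J D HJ HDi HDW2) as HJDi.
  assert (Wx : W x) by (apply HW2W, (contract_to_indep_sub _ _ _ x HJ); auto).
  destruct (contract_indep_ground _ _ _ x HJ Jx) as [HxNB _].
  apply ground_contract in HxNB; apply (proj2 HxNB).
  apply (proj2 (proj2 HB)) with (setU B (set1 x)); unfold_sets; auto.
  apply (contract_indep_intro N _ D HN HD).
  - intros y [By | Hy]; [| subst y; apply HxNB].
    rewrite <- HE; apply wave_union_ground, HBW; auto.
  - intros y [By | Hy] [_ nWy]; apply nWy; [apply HBW | subst y]; auto.
  - apply (indep_subset N HN _ _ HJDi); unfold_sets.
    intros y [[By | Hy] | Dy]; [| subst y |]; auto.
Qed.

(* Elements of W(M/B, N/B) are loops of M/B: a non-loop would enlarge B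
   inside M|W. *)
Lemma contracted_wave_loops x :
  wave_union (contract M B) (contract N B) x -> loop (contract M B) x.
Proof.
  intros [W2 [HW2 W2x]].
  destruct wave_base_M as [HBi [HBW HBmax]].
  assert (Ex : ground (contract M B) x) by (apply (proj1 HW2); auto).
  split; auto. intros Hx.
  apply (contract_indep_iff M HM B _ HBi) in Hx.
  destruct Hx as [_ [HxB Hxi]].
  apply (HxB x); [reflexivity |].
  apply (HBmax (setU (set1 x) B)); unfold_sets; auto.
  intros y [Hy | By]; [subst y; apply (contracted_wave_sub W2) | apply HBW]; auto.
Qed.

Theorem cond_contract_wave_base :
  cond (contract M B) (contract N B) /\ cond_plus (contract M B) (contract N B).
Proof.
  assert (HNB : is_matroid (contract N B)) by (apply contract_is_matroid; auto).
  assert (Hrank : forall W2, subset W2 W ->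
            rank_zero (contract_to (contract N B) W2)).
  { intros W2 HW2. apply rank_zero_of_trivial; [apply contract_is_matroid; auto |].
    intros J x; apply contracted_coindep_trivial; auto. }
  split; [| split].
  - intros W2 HW2; exists set0; split.
    + apply Hrank, contracted_wave_sub; auto.
    + apply indep_empty, contract_is_matroid; auto.
  - apply contracted_wave_loops.
  - apply Hrank; intros x [W2 [HW2 W2x]]; apply (contracted_wave_sub W2); auto.
Qed.

End WaveBase.

(* The general case reduces to the case I = ∅ applied to M/I and N/I, since
   M/(I ∪ B) = (M/I)/B and N/(I ∪ B) = (N/I)/B. *)
Theorem mainTheorem9 (T : Type) (M N : mdata T) (I B : set T) :
  is_matroid M -> is_matroid N -> ground M = ground N ->
  indep M I -> indep N I ->
  common_bases (contract M I) (contract N I)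
               (wave_union (contract M I) (contract N I)) B ->
  nice_feasible M N (setU I B).
Proof.
  intros HM HN HE HIM HIN HB.
  pose proof (contract_is_matroid M I HM) as HMI.
  pose proof (contract_is_matroid N I HN) as HNI.
  assert (HEI : ground (contract M I) = ground (contract N I))
    by (simpl; rewrite HE; reflexivity).
  assert (HBM : indep (contract M I) B)
    by exact (proj1 (wave_base_M _ _ _ HB)).
  assert (HBN : indep (contract N I) B)
    by exact (wave_base_indep_N _ _ _ HNI HB).
  destruct (cond_contract_wave_base _ _ _ HMI HNI HEI HB) as [Hcond Hplus].
  rewrite <- (contract_in_stages M I B HM HIM HBM),
          <- (contract_in_stages N I B HN HIN HBN) in *.
  refine (conj (conj _ (conj _ Hcond)) Hplus);
    apply union_indep_of_contract; auto.
Qed.
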